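(* Let $\mathcal F'=(\mathcal A',U,\varphi)$ be a tree weakening of a sequential formalism $\mathcal F=(\mathcal A,U,\varphi)$. If every algebraically closed scenario for $\mathcal F$ is satisfiable, then every algebraically closed scenario for $\mathcal F'$ is satisfiable.
   Context: A finite non-associative algebra is a tuple $(\mathcal A,\cup,\neg,\emptyset,\mathcal B,\diamond,\overline{\cdot},e)$ where $(\mathcal A,\cup,\neg,\emptyset,\mathcal B)$ is a finite Boolean algebra and for all $x,y,z$: $\overline{\overline x}=x$, $\overline{x\cup y}=\overline x\cup\overline y$, $\overline{x\diamond y}=\overline y\diamond\overline x$, $e\diamond x=x\diamond e=x$, $x\diamond(y\cup z)=(x\diamond y)\cup(x\diamond z)$, $(x\diamond y)\cap\overline z=\emptyset\iff(y\diamond z)\cap\overline x=\emptyset$. $r\subseteq r'$ means $r\cup r'=r'$; atoms are basic relations; $\mathsf B_i$ denotes the atoms of $\mathcal A_i$. A projection operator from $\mathcal A$ to $\mathcal A'$ is a map $\Rsh$ with $\Rsh(r\cup r')=\Rsh r\cup\Rsh r'$ and $\Rsh\overline r=\overline{\Rsh r}$. A finite multi-algebra is a product $\mathcal A_1\times\cdots\times\mathcal A_m$ of finite non-associative algebras with projection operators $\Rsh_i^j:\mathcal A_i\to\mathcal A_j$ for distinct $i,j$; operations and $\subseteq$ componentwise; universal $\mathcal B=(\mathcal B_1,\dots,\mathcal B_m)$; $R$ basic if all $R_i$ atoms; $B\in R$ means $B$ basic, $B\subseteq R$; $R$ closed under projection if $R_j\subseteq\Rsh_i^jR_i$ for all distinct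 $i,j$; projection closure $\Rsh R$: repeatedly replace $R_j$ by $R_j\cap\Rsh_i^jR_i$ to a fixed point. A sequential formalism is $(\mathcal A,U,\varphi)$ with $\mathcal A$ a finite multi-algebra, $U\ne\emptyset$, $\varphi:\mathcal A\to 2^{U\times U}$ satisfying $\varphi(\Rsh R)=\varphi(R)$, $\varphi(\overline R)=\varphi(R)^{-1}$, $\varphi((\emptyset,\dots,\emptyset))=\emptyset$, $\varphi(R\diamond R')\supseteq(\varphi(R)\circ\varphi(R'))\cap\varphi(\mathcal B)$, $\varphi(R\cap R')=\varphi(R)\cap\varphi(R')$, $\varphi(R)=\bigcup_{B\in R}\varphi(B)$. A network is a finite set $E$ of variables with $N^{xy}$ for distinct $x,y$, $N^{yx}=\overline{N^{xy}}$; a scenario if all $N^{xy}$ basic; satisfiable if some $(u_x)\subseteq U$ has $(u_x,u_y)\in\varphi(N^{xy})$ for all distinct $x,y$; algebraically closed (for a multi-algebra) if $N^{xz}\subseteq N^{xy}\diamond N^{yz}$ for all distinct $x,y,z$ and every $N^{xy}$ is closed under projection (for that multi-algebra's projections). Inverse projection $\check\Rsh_i^j:\mathcal A_j\to\mathcal A_i$: for $b\in\mathsf B_i$, $b'\in\mathsf B_j$, $b\subseteq\check\Rsh_i^jb'\iff b'\subseteq\Rsh_i^jb$. An anti-tree structure on $V$ is a directed graph with a root $r$ such that every $v\ne r$ has exactly one directed path to $r$. A plenary anti-tree structure of $\mathcal A$ is an anti-tree structure $\mathtt A$ on $\{1,\dots,m\}$ such that for all distinct $i,j$, with $i=k_0\to\cdots\to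 k_s\leftarrow\cdots\leftarrow k_{s+t+1}=j$ the shortest oriented chain between them, every $b\in\mathsf B_i$ satisfies $\Rsh_i^jb\supseteq\check\Rsh_j^{k_{s+t}}\cdots\check\Rsh_{k_{s+1}}^{k_s}\Rsh_{k_{s-1}}^{k_s}\cdots\Rsh_i^{k_1}b$; $\mathcal A$ is a tree multi-algebra if it has one. $\mathcal A'$ is a weakening of $\mathcal A$ if it has the same algebras and operations and $\Rsh_i^jb\subseteq\Rsh_i'^jb$ for all distinct $i,j$ and atoms $b$ of $\mathcal A_i$; a tree weakening of a tree multi-algebra $\mathcal A$ if moreover, for some plenary anti-tree structure $\mathtt A$ of $\mathcal A$, $\Rsh_i^jb=\Rsh_i'^jb$ whenever $i\to j$ is an edge of $\mathtt A$. $(\mathcal A',U,\varphi)$ is then a (tree) weakening of $(\mathcal A,U,\varphi)$. *)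

From mathcomp Require Import all_boot.
Set Implicit Arguments. Unset Strict Implicit. Unset Printing Implicit Defensive.

(* A finite Boolean algebra is represented (up to isomorphism) as the powerset
   {set T} of its finite set of atoms T; the atoms (basic relations) are the
   singletons [set b], b : T. *)
Record nalg (T : finType) := NAlg {
  ncomp : {set T} -> {set T} -> {set T};
  nconv : {set T} -> {set T};
  nid : {set T} }.

Definition is_nalg (T : finType) (A : nalg T) : Prop :=
  (forall x, nconv A (nconv A x) = x) /\
  (forall x y, nconv A (x :|: y) = nconv A x :|: nconv A y) /\
  (forall x y, nconv A (ncomp A x y) = ncomp A (nconv A y) (nconv A x)) /\
  (forall x, ncomp A (nid A) x = x /\ ncomp A x (nid A) = x) /\
  (forall x y z, ncomp A x (y :|: z) = ncomp A x y :|: ncomp A x z) /\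
  (forall x y z, (ncomp A x y :&: nconv A z == set0)
                 = (ncomp A y z :&: nconv A x == set0)).

Section Multi.
Variable m : nat.
Variable At : 'I_m -> finType.

Definition mrel := forall i : 'I_m, {set At i}.
Definition projs := forall i j : 'I_m, {set At i} -> {set At j}.

Definition is_projection (i j : 'I_m) (p : {set At i} -> {set At j})
  (Ai : nalg (At i)) (Aj : nalg (At j)) : Prop :=
  (forall r r', p (r :|: r') = p r :|: p r') /\
  (forall r, p (nconv Ai r) = nconv Aj (p r)).

Definition is_multi_alg (alg : forall i, nalg (At i)) (P : projs) : Prop :=
  (forall i, is_nalg (alg i)) /\
  (forall i j, i != j -> is_projection (P i j) (alg i) (alg j)).

Variable alg : forall i, nalg (At i).

Definition mconv (R : mrel) : mrel := fun i => nconv (alg i) (R i).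
Definition mcomp (R R' : mrel) : mrel := fun i => ncomp (alg i) (R i) (R' i).
Definition mcap (R R' : mrel) : mrel := fun i => R i :&: R' i.
Definition mempty : mrel := fun i => set0.
Definition mfull : mrel := fun i => setT.
Definition msub (R R' : mrel) : Prop := forall i, R i \subset R' i.
Definition mbasic (R : mrel) : Prop := forall i, #|R i| = 1.

Definition closed_proj (P : projs) (R : mrel) : Prop :=
  forall i j, i != j -> R j \subset P i j (R i).

Definition pstep (P : projs) (R : mrel) : mrel :=
  fun j => R j :&: \bigcap_(i | i != j) P i j (R i).
(* iterating until a fixed point is reached: since every non-stationary
   round removes at least one atom, sum_i |B_i| rounds suffice *)
Definition pclos (P : projs) (R : mrel) : mrel :=
  iter (\sum_(i < m) #|At i|) (pstep P) R.

Definition seq_formalism (P : projs) (U : Type) (phi : mrel -> U -> U -> Prop) : Prop :=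
  is_multi_alg alg P /\
  inhabited U /\
  (forall R u v, phi (pclos P R) u v <-> phi R u v) /\
  (forall R u v, phi (mconv R) u v <-> phi R v u) /\
  (forall u v, ~ phi mempty u v) /\
  (forall R R' u w v, phi R u w -> phi R' w v -> phi mfull u v ->
                      phi (mcomp R R') u v) /\
  (forall R R' u v, phi (mcap R R') u v <-> phi R u v /\ phi R' u v) /\
  (forall R u v, phi R u v <-> exists B, [/\ mbasic B, msub B R & phi B u v]).

Definition network (E : finType) (N : E -> E -> mrel) : Prop :=
  forall x y, x != y -> forall i, N y x i = mconv (N x y) i.

Definition scenario (E : finType) (N : E -> E -> mrel) : Prop :=
  forall x y, x != y -> mbasic (N x y).

Definition satisfiable (U : Type) (phi : mrel -> U -> U -> Prop)
  (E : finType) (N : E -> E -> mrel) : Prop :=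
  exists u : E -> U, forall x y, x != y -> phi (N x y) (u x) (u y).

Definition alg_closed (P : projs) (E : finType) (N : E -> E -> mrel) : Prop :=
  (forall x y z, x != y -> y != z -> x != z -> msub (N x z) (mcomp (N x y) (N y z)))
  /\ (forall x y, x != y -> closed_proj P (N x y)).

(* inverse projection  check-Rsh_i^j : A_j -> A_i, determined on atoms by
   b <= check-Rsh_i^j b'  <->  b' <= Rsh_i^j b, and extended additively *)
Definition invproj (P : projs) (i j : 'I_m) (S : {set At j}) : {set At i} :=
  [set b : At i | [exists b' : At j, (b' \in S) && (b' \in P i j [set b])]].

(* anti-tree structure on 'I_m: root r, every v <> r has a unique outgoing
   edge v -> par v, and iterating par from any vertex reaches r *)
Definition antitree (par : 'I_m -> 'I_m) (r : 'I_m) : Prop :=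
  par r = r /\ forall v, iter m par v = r.

(* the directed path v = v_0 -> v_1 -> ... -> r *)
Definition up (par : 'I_m -> 'I_m) (r : 'I_m) (v : 'I_m) : seq 'I_m :=
  take (index r (traject par v m)).+1 (traject par v m).

(* shortest oriented chain i = k_0 -> ... -> k_s <- ... <- k_{s+t+1} = j *)
Definition lca par r (i j : 'I_m) : 'I_m :=
  nth r (up par r i) (find (fun k => k \in up par r j) (up par r i)).
(* [k_1; ...; k_s] *)
Definition upseg par r (i j : 'I_m) : seq 'I_m :=
  behead (take (find (fun k => k \in up par r j) (up par r i)).+1 (up par r i)).
(* [k_{s+1}; ...; k_{s+t+1}] *)
Definition downseg par r (i j : 'I_m) : seq 'I_m :=
  behead (rev (take (index (lca par r i j) (up par r j)).+1 (up par r j))).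

Definition dset := {k : 'I_m & {set At k}}.
Definition fwd (P : projs) (x : dset) (k' : 'I_m) : dset :=
  existT _ k' (P (projT1 x) k' (projT2 x)).
Definition bwd (P : projs) (x : dset) (k' : 'I_m) : dset :=
  existT _ k' (@invproj P k' (projT1 x) (projT2 x)).
Definition dget (j : 'I_m) (x : dset) : {set At j} :=
  let (k, S) := x in
  match k =P j with
  | ReflectT e => eq_rect k (fun k => {set At k}) S j e
  | ReflectF _ => set0
  end.

(* check-Rsh_j^{k_{s+t}} ... check-Rsh_{k_{s+1}}^{k_s} Rsh_{k_{s-1}}^{k_s} ... Rsh_i^{k_1} S *)
Definition chain_apply (P : projs) par r (i j : 'I_m) (S : {set At i}) : {set At j} :=
  dget j (foldl (bwd P) (foldl (fwd P) (existT _ i S) (upseg par r i j))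
                 (downseg par r i j)).

Definition plenary (P : projs) par r : Prop :=
  antitree par r /\
  forall i j : 'I_m, i != j -> forall b : At i,
    chain_apply P par r j [set b] \subset P i j [set b].

Definition tree_weakening (P P' : projs) : Prop :=
  [/\ is_multi_alg alg P',
      forall i j, i != j -> forall b : At i, P i j [set b] \subset P' i j [set b] &
      exists par r, plenary P par r /\
        forall i, i != r -> forall b : At i, P i (par i) [set b] = P' i (par i) [set b]].

End Multi.

(* Along an edge k -> par k of the anti-tree the two projection families agree,
   so a basic relation that is closed under the weak projections satisfies
   R_(par k) <= Rsh_k^(par k) R_k for every edge.  Being basic, it then also
   satisfies R_k <= check-Rsh_k^(par k) R_(par k), and monotonicity carries the
   inclusion R_k <= S through every forward and backward step of the oriented
   chain from i to j.  Hence R_j lies in the chain image of R_i, which the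
   plenary condition bounds by Rsh_i^j R_i: the scenario is closed under the
   original projections, and the hypothesis on F applies to it verbatim. *)
From mathcomp Require Import all_boot.
Set Implicit Arguments. Unset Strict Implicit. Unset Printing Implicit Defensive.

Lemma last_take (T : Type) (x : T) (s : seq T) n :
  n <= size s -> last x (take n s) = nth x (x :: s) n.
Proof.
elim: s x n => [|y s IHs] x [|n] //= lt_n_s.
by rewrite IHs // (set_nth_default x) //= ltnS.
Qed.

Lemma mem_take_index (T : eqType) (x : T) (s : seq T) :
  x \in s -> x \in take (index x s).+1 s.
Proof.
elim: s => [|y s IHs] //=; rewrite inE.
have [-> | _] /= := eqVneq y x; first by rewrite mem_head.
by move/IHs; rewrite inE => ->; rewrite orbT.
Qed.

Section AntiTree.

Variables (m : nat) (par : 'I_m -> 'I_m) (r : 'I_m).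

Definition tree_edge (a b : 'I_m) := (a != r) && (b == par a).

Lemma path_take_index_root x s :
  fpath par x s -> path tree_edge x (take (index r (x :: s)) s).
Proof.
elim: s x => [|y s IHs] x //=.
have [-> | x_neq_r] //= := eqVneq x r.
case/andP=> /eqP <- p_ys.
by rewrite /tree_edge x_neq_r eqxx /=; apply: IHs.
Qed.

Hypothesis tree : antitree par r.

Lemma par_neq k : k != r -> par k != k.
Proof.
move=> k_neq_r; apply: contraNneq k_neq_r => par_k.
have iter_k n : iter n par k = k by elim: n => //= n ->.
by rewrite -(tree.2 k) iter_k.
Qed.

Lemma root_in_traject v : r \in traject par v m.
Proof.
rewrite -(tree.2 v).
have: ~~ uniq (traject par v m.+1).
  apply/negP => /card_uniqP; rewrite size_traject => card_traj.
  by have := max_card (mem (traject par v m.+1)); rewrite card_traj card_ord ltnn.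
by rewrite looping_uniq negbK => /loopingP.
Qed.

Lemma up_spec v :
  [/\ up par r v = v :: behead (up par r v),
      path tree_edge v (behead (up par r v)) & r \in up par r v].
Proof.
have m_gt0 : 0 < m by case: (m) v => [[]|].
have def_traj : traject par v m = v :: traject par (par v) m.-1.
  by rewrite -trajectS prednK.
have := mem_take_index (root_in_traject v); rewrite /up def_traj /=.
by split=> //; apply: path_take_index_root (fpath_traject _ _ _).
Qed.

Lemma lca_in_up i j : lca par r i j \in up par r j.
Proof.
have [_ _ r_i] := up_spec i; have [_ _ r_j] := up_spec j.
by apply: nth_find; apply/hasP; exists r.
Qed.

Lemma upseg_spec i j :
  path tree_edge i (upseg par r i j) /\ last i (upseg par r i j) = lca par r i j.
Proof.
have [def_ui path_ui r_i] := up_spec i; have [_ _ r_j] := up_spec j.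
rewrite /upseg /lca; set f := find _ _.
have lt_f : f < size (up par r i) by rewrite -has_find; apply/hasP; exists r.
rewrite {1 2}def_ui /= take_path //; split=> //.
rewrite last_take -?def_ui ?(set_nth_default r) //.
by move: lt_f; rewrite {1}def_ui.
Qed.

Lemma downseg_spec i j :
  path (fun a b => tree_edge b a) (lca par r i j) (downseg par r i j) /\
  last (lca par r i j) (downseg par r i j) = j.
Proof.
have [def_uj path_uj _] := up_spec j.
have lca_j := lca_in_up i j.
rewrite /downseg; set l := lca par r i j in lca_j *.
set idx := index l _.
have lt_idx : idx < size (up par r j) by rewrite index_mem.
set p := take idx (behead (up par r j)).
have p_path : path tree_edge j p by apply: take_path.
have last_p : last j p = l.
  rewrite last_take -?def_uj ?(set_nth_default r) ?nth_index //.
  by move: lt_idx; rewrite {1}def_uj.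
have -> : take idx.+1 (up par r j) = j :: p by rewrite {1}def_uj.
rewrite lastI rev_rcons /= -last_p rev_path; split=> //.
by case: (p) => [|y p'] //=; rewrite rev_cons last_rcons.
Qed.

End AntiTree.

Section ChainPropagation.

Variables (m : nat) (At : 'I_m -> finType) (P : projs At).
Variables (par : 'I_m -> 'I_m) (r : 'I_m) (R : mrel At).
Arguments P : clear implicits.

Definition covers (x : dset At) := R (projT1 x) \subset projT2 x.

Hypothesis covers_fwd : forall k, k != r -> forall S : {set At k},
  R k \subset S -> R (par k) \subset P k (par k) S.
Hypothesis covers_bwd : forall k, k != r -> forall S : {set At (par k)},
  R (par k) \subset S -> R k \subset invproj P k S.

Lemma covers_foldl_fwd s x :
  path (tree_edge par r) (projT1 x) s -> covers x ->
  covers (foldl (fwd P) x s) /\ projT1 (foldl (fwd P) x s) = last (projT1 x) s.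
Proof.
elim: s x => [|y s IHs] [k S] //= /andP[/andP[k_neq_r /eqP ->] p_s] cov_x.
by apply: IHs => //; apply: covers_fwd.
Qed.

Lemma covers_foldl_bwd s x :
  path (fun a b => tree_edge par r b a) (projT1 x) s -> covers x ->
  covers (foldl (bwd P) x s) /\ projT1 (foldl (bwd P) x s) = last (projT1 x) s.
Proof.
elim: s x => [|y s IHs] [k S] //= /andP[/andP[y_neq_r /eqP def_k] p_s] cov_x.
by subst k; apply: IHs => //; apply: covers_bwd.
Qed.

Lemma covers_dget j x : covers x -> projT1 x = j -> R j \subset dget j x.
Proof.
case: x => k S /= cov_x def_k; subst k; rewrite /dget.
by case: eqP => // e; rewrite (eq_axiomK e).
Qed.

Hypothesis tree : antitree par r.

Lemma sub_chain_apply i j (S : {set At i}) :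
  R i \subset S -> R j \subset chain_apply P par r j S.
Proof.
move=> RiS; have [up_path up_last] := upseg_spec tree i j.
have [down_path down_last] := downseg_spec tree i j.
have [cov1 end1] := covers_foldl_fwd (x := existT _ i S) up_path RiS.
rewrite /= up_last in end1; rewrite -end1 in down_path down_last.
have [cov2 end2] := covers_foldl_bwd down_path cov1.
by apply: covers_dget cov2 _; rewrite end2.
Qed.

End ChainPropagation.

Lemma proj_monotone (T T' : finType) (p : {set T} -> {set T'}) :
  (forall S S' : {set T}, p (S :|: S') = p S :|: p S') ->
  forall S S' : {set T}, S \subset S' -> p S \subset p S'.
Proof. by move=> p_add S S' /setUidPr <-; rewrite p_add subsetUl. Qed.

Lemma sub_invproj_basic m (At : 'I_m -> finType) (P : projs At) i j
    (b : At i) (b' : At j) (S : {set At j}) :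
  [set b'] \subset P i j [set b] -> [set b'] \subset S ->
  [set b] \subset invproj P i S.
Proof.
rewrite !sub1set => b'_Pb b'_S; rewrite inE.
by apply/existsP; exists b'; rewrite b'_S.
Qed.

Section BasicRelations.

Variables (m : nat) (At : 'I_m -> finType) (P : projs At).
Variables (par : 'I_m -> 'I_m) (r : 'I_m) (R : mrel At).
Arguments P : clear implicits.

Hypothesis P_add : forall i j, i != j ->
  forall S S', P i j (S :|: S') = P i j S :|: P i j S'.
Hypothesis plenary_P : plenary P par r.
Hypothesis R_basic : mbasic R.
Hypothesis R_edge : forall k, k != r -> R (par k) \subset P k (par k) (R k).

Lemma closed_proj_basic_tree_edges : closed_proj P R.
Proof.
have [tree chain_P] := plenary_P.
have atom k : exists b, R k = [set b] by apply/cards1P/eqP.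
have fwd_R k : k != r -> forall S : {set At k},
    R k \subset S -> R (par k) \subset P k (par k) S.
  move=> k_neq_r S RkS; apply: subset_trans (R_edge k_neq_r) _.
  by apply: proj_monotone RkS; apply: P_add; rewrite eq_sym (par_neq tree).
have bwd_R k : k != r -> forall S : {set At (par k)},
    R (par k) \subset S -> R k \subset invproj P k S.
  move=> k_neq_r S; have [b Rk] := atom k; have [b' Rpar] := atom (par k).
  by rewrite Rk Rpar; apply: sub_invproj_basic; rewrite -Rpar -Rk R_edge.
move=> i j i_neq_j; have [b Ri] := atom i.
apply: subset_trans (sub_chain_apply fwd_R bwd_R tree j (subxx (R i))) _.
by rewrite Ri chain_P.
Qed.

End BasicRelations.

Theorem proposition6p30 (m : nat) (At : 'I_m -> finType)
  (alg : forall i, nalg (At i)) (P P' : projs At)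
  (U : Type) (phi : mrel At -> U -> U -> Prop) :
  seq_formalism alg P phi ->
  tree_weakening alg P P' ->
  (forall (E : finType) (N : E -> E -> mrel At),
      network alg N -> scenario N -> alg_closed alg P N -> satisfiable phi N) ->
  forall (E : finType) (N : E -> E -> mrel At),
    network alg N -> scenario N -> alg_closed alg P' N -> satisfiable phi N.
Proof.
move=> [[_ P_proj] _] [_ _ [par [r [plenary_P P_edge]]]] satF E N
  netN scenN [compN closedN].
apply: satF => //; split=> // x y x_neq_y.
apply: (closed_proj_basic_tree_edges _ plenary_P (scenN x y x_neq_y)).
  by move=> i j i_neq_j; have [P_add _] := P_proj i j i_neq_j.
move=> k k_neq_r; have [b Nk] : exists b, N x y k = [set b].
  by apply/cards1P/eqP/scenN.
have k_neq_par : k != par k by rewrite eq_sym (par_neq plenary_P.1).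
by have := closedN x y x_neq_y k (par k) k_neq_par; rewrite Nk P_edge.
Qed.
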